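(* Let $\mathcal{L}\subseteq\{0,1\}^n$ be a nonempty lattice (closed under coordinatewise minimum and maximum) and let $d_{\mathcal{L}}(x)=\min_{y\in\mathcal{L}}\|x-y\|_1$. Define $f:\{0,1\}^{n+2}\to\mathbb{R}$, writing arguments as $(a,b,x)$ with $a,b\in\{0,1\}$, $x\in\{0,1\}^n$, by $f(0,0,x)=\|x\|_1$, $f(1,1,x)=1-\|x\|_1$, and $f(0,1,x)=f(1,0,x)=d_{\mathcal{L}}(x)$. Then $f$ has exactly $|\mathcal{L}|$ violated squares, namely the squares $\{(0,0,x),(0,1,x),(1,0,x),(1,1,x)\}$ for $x\in\mathcal{L}$.
   Context: A square in $\{0,1\}^m$ is a set $\{z, z+\mathbf{e}_i, z+\mathbf{e}_j, z+\mathbf{e}_i+\mathbf{e}_j\}$ with $i\neq j$, $z_i=z_j=0$, where $\mathbf{e}_i$ is the $i$-th standard basis vector; it is violated (for $f$) if $f(z)+f(z+\mathbf{e}_i+\mathbf{e}_j) > f(z+\mathbf{e}_i)+f(z+\mathbf{e}_j)$. *)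

From HB Require Import structures.
From mathcomp Require Import all_boot all_order all_algebra.
Set Implicit Arguments. Unset Strict Implicit. Unset Printing Implicit Defensive.
Import Order.TTheory GRing.Theory Num.Theory.

(* The hypercube {0,1}^m: points are boolean functions on 'I_m (true = 1). *)
Definition cube (m : nat) := {ffun 'I_m -> bool}.

(* z + e_i, used only when z_i = 0: set coordinate i to 1. *)
Definition addE m (z : cube m) (i : 'I_m) : cube m :=
  [ffun k => (k == i) || z k].

Definition square m (z : cube m) (i j : 'I_m) : {set cube m} :=
  [set z; addE z i; addE z j; addE (addE z i) j].

Definition violated_squares (R : realFieldType) m (f : cube m -> R)
  : {set {set cube m}} :=
  [set S : {set cube m} | [exists z : cube m, exists i : 'I_m, exists j : 'I_m,
     [&& i != j, ~~ z i, ~~ z j,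
         (f (addE z i) + f (addE z j) < f z + f (addE (addE z i) j))%R
       & S == square z i j]]].

Definition norm1 m (x : cube m) : nat := #|[set k | x k]|.
Definition dist1 m (x y : cube m) : nat := #|[set k | x k != y k]|.

(* d_L(x) = min_{y in L} ||x - y||_1  (the neutral element m is an upper
   bound of all distances, so for nonempty L this is exactly the minimum). *)
Definition distL m (L : {set cube m}) (x : cube m) : nat :=
  \big[minn/m]_(y in L) dist1 x y.

Definition cmin m (x y : cube m) : cube m := [ffun k => x k && y k].
Definition cmax m (x y : cube m) : cube m := [ffun k => x k || y k].
Definition is_lattice m (L : {set cube m}) : Prop :=
  forall x y, x \in L -> y \in L -> cmin x y \in L /\ cmax x y \in L.

(* The point (a, b, x) of {0,1}^(n+2): coordinate 0 is a, 1 is b, and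
   coordinate k+2 is x_k. *)
Definition mkpt n (a b : bool) (x : cube n) : cube n.+2 :=
  [ffun k : 'I_n.+2 => if val k == 0%N then a else if val k == 1%N then b
     else match (insub (val k - 2)%N : option 'I_n) with
          | Some j => x j | None => false end].

Definition tailpt n (y : cube n.+2) : cube n :=
  [ffun k : 'I_n => y (lift ord0 (lift ord0 k))].

Definition f_L (R : realFieldType) n (L : {set cube n}) (y : cube n.+2) : R :=
  let x := tailpt y in
  match y ord0, y (lift ord0 ord0) with
  | false, false => ((norm1 x)%:R)%R
  | true, true => (1 - (norm1 x)%:R)%R
  | _, _ => ((distL L x)%:R)%R
  end.

(* On the square spanned by the first two coordinates at (0,0,x) the violation
   inequality reads 2 d_L(x) < |x| + (1 - |x|) = 1, which holds exactly when
   x is in L.  In two directions e_k, e_l of x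
   the norm terms are modular and d_L is submodular: x and x+e_k+e_l are the
   coordinatewise min and max of x+e_k and x+e_l, and the min and max of two
   nearest points of L to these lie in L and are, together, no farther away.
   A square mixing a first-two coordinate with a direction of x reduces to d_L
   being 1-Lipschitz. *)
From HB Require Import structures.
From mathcomp Require Import all_boot all_order all_algebra.
From mathcomp Require Import lra.
Import Order.TTheory GRing.Theory Num.Theory.
Set Implicit Arguments. Unset Strict Implicit.

Local Notation ordB := (lift ord0 ord0).
Local Notation ordX k := (lift ord0 (lift ord0 k)).

Section Coordinates.
Variable n : nat.
Implicit Types (a b : bool) (x : cube n) (k : 'I_n).

Variant ord_split2_spec : 'I_n.+2 -> Type :=
  | OrdA : ord_split2_spec ord0
  | OrdB : ord_split2_spec ordB
  | OrdX k : ord_split2_spec (ordX k).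

Lemma ord_split2P i : ord_split2_spec i.
Proof.
case: (unliftP ord0 i) => [i1 ->|->]; last exact: OrdA.
by case: (unliftP ord0 i1) => [k ->|->]; [exact: OrdX | exact: OrdB].
Qed.

Lemma mkpt_a a b x : mkpt a b x ord0 = a.
Proof. by rewrite ffunE. Qed.

Lemma mkpt_b a b x : mkpt a b x ordB = b.
Proof. by rewrite ffunE. Qed.

Lemma mkpt_x a b x k : mkpt a b x (ordX k) = x k.
Proof.
rewrite ffunE /= /bump !leq0n !add1n !subSS subn0.
by case: insubP => [j _ /val_inj ->|]; rewrite ?ltn_ord.
Qed.

Definition mkpt_coord := (mkpt_a, mkpt_b, mkpt_x).

Lemma tailpt_mkpt a b x : tailpt (mkpt a b x) = x.
Proof. by apply/ffunP => k; rewrite ffunE mkpt_x. Qed.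

Lemma mkpt_surj (z : cube n.+2) : exists a b x, z = mkpt a b x.
Proof.
exists (z ord0), (z ordB), (tailpt z).
by apply/ffunP => i; case: (ord_split2P i) => [||k]; rewrite !mkpt_coord // ffunE.
Qed.

Lemma mkpt_inj a b a' b' x y :
  mkpt a b x = mkpt a' b' y -> [/\ a = a', b = b' & x = y].
Proof.
move=> E; split; first by rewrite -(mkpt_a a b x) E mkpt_a.
  by rewrite -(mkpt_b a b x) E mkpt_b.
by rewrite -(tailpt_mkpt a b x) E tailpt_mkpt.
Qed.

Lemma addE_mkpt_a a b x : addE (mkpt a b x) ord0 = mkpt true b x.
Proof.
by apply/ffunP => i; case: (ord_split2P i) => [||k]; rewrite ffunE !mkpt_coord.
Qed.

Lemma addE_mkpt_b a b x : addE (mkpt a b x) ordB = mkpt a true x.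
Proof.
apply/ffunP => i; case: (ord_split2P i) => [||k];
  by rewrite ffunE !mkpt_coord ?(inj_eq (@lift_inj _ ord0)).
Qed.

Lemma addE_mkpt_x a b x k : addE (mkpt a b x) (ordX k) = mkpt a b (addE x k).
Proof.
apply/ffunP => i; case: (ord_split2P i) => [||l];
  by rewrite ffunE !mkpt_coord ?(inj_eq (@lift_inj _ ord0)) ?ffunE.
Qed.

Definition addE_mkpt := (addE_mkpt_a, addE_mkpt_b, addE_mkpt_x).

Lemma f_L_mkpt (R : realFieldType) (L : {set cube n}) a b x :
  f_L R L (mkpt a b x) =
    match a, b with
    | false, false => (norm1 x)%:R
    | true, true => 1 - (norm1 x)%:R
    | _, _ => (distL L x)%:R
    end%R.
Proof. by rewrite /f_L mkpt_a mkpt_b tailpt_mkpt. Qed.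

End Coordinates.

Section CubeMetric.
Variable m : nat.
Implicit Types (x y u v : cube m) (k l : 'I_m).

Lemma dist1E x y : dist1 x y = \sum_k (x k != y k).
Proof.
by rewrite /dist1 -sum1_card big_mkcond; apply: eq_bigr => k _; rewrite inE.
Qed.

Lemma dist1_le_dim x y : dist1 x y <= m.
Proof. by rewrite /dist1 (leq_trans (max_card _)) // card_ord. Qed.

Lemma dist1C x y : dist1 x y = dist1 y x.
Proof. by rewrite /dist1; apply: eq_card => k; rewrite !inE eq_sym. Qed.

Lemma dist1_eq0 x y : (dist1 x y == 0) = (x == y).
Proof.
rewrite cards_eq0; apply/eqP/eqP => [E|->].
  by apply/ffunP => k; apply/eqP; have := in_set0 k; rewrite -E inE; case: eqP.
by apply/setP => k; rewrite !inE eqxx.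
Qed.

Lemma dist1_triangle x y z : dist1 x z <= dist1 x y + dist1 y z.
Proof.
rewrite !dist1E -big_split /=; apply: leq_sum => k _.
by case: (x k); case: (y k); case: (z k).
Qed.

Lemma dist1_addE x k : dist1 x (addE x k) <= 1.
Proof.
rewrite /dist1 -(cards1 k); apply/subset_leq_card/subsetP => i.
by rewrite !inE ffunE; case: (i == k); rewrite ?eqxx.
Qed.

Lemma dist1_cmin_cmax x y u v :
  dist1 (cmin x y) (cmin u v) + dist1 (cmax x y) (cmax u v)
    <= dist1 x u + dist1 y v.
Proof.
rewrite !dist1E -!big_split /=; apply: leq_sum => k _; rewrite !ffunE.
by case: (x k); case: (y k); case: (u k); case: (v k).
Qed.

Lemma norm1_addE x k : ~~ x k -> norm1 (addE x k) = (norm1 x).+1.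
Proof.
move=> xk; rewrite /norm1; have -> : [set i | addE x k i] = k |: [set i | x i].
  by apply/setP => i; rewrite !inE ffunE.
by rewrite cardsU1 inE (negbTE xk).
Qed.

Lemma addEC x k l : addE (addE x k) l = addE (addE x l) k.
Proof. by apply/ffunP => i; rewrite !ffunE orbCA. Qed.

Lemma cmin_addE x k l :
  k != l -> ~~ x k -> ~~ x l -> cmin (addE x k) (addE x l) = x.
Proof.
move=> kl xk xl; apply/ffunP => i; rewrite !ffunE.
have [->|_] := eqVneq i k; first by rewrite (negbTE kl) (negbTE xk).
by have [->|_] := eqVneq i l; rewrite /= ?andbb ?(negbTE xl).
Qed.

Lemma cmax_addE x k l : cmax (addE x k) (addE x l) = addE (addE x k) l.
Proof.
by apply/ffunP => i; rewrite !ffunE; case: (i == k); case: (i == l); case: (x i).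
Qed.

End CubeMetric.

Section DistanceToLattice.
Variables (m : nat) (L : {set cube m}).
Hypothesis L_neq0 : L != set0.
Implicit Types (x y : cube m).

(* [minn] on [nat] is [Order.min], so the order library's [bigmin] lemmas apply
   to [distL]. *)
Lemma distL_le x y : y \in L -> distL L x <= dist1 x y.
Proof. exact: (@bigmin_le_cond _ _ _ m y (fun y => y \in L) (dist1 x)). Qed.

Lemma distL_attained x : exists2 y, y \in L & distL L x = dist1 x y.
Proof.
have [y0 y0L] := set0Pn _ L_neq0.
case: (arg_minP (dist1 x) y0L) => y yL ymin; exists y => //.
have ge_distL : (dist1 x y <= distL L x)%O.
  by apply/bigmin_geP; split; [exact: dist1_le_dim | exact: ymin].
by apply/eqP; rewrite eqn_leq distL_le.
Qed.

Lemma distL_eq0 x : (distL L x == 0) = (x \in L).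
Proof.
apply/idP/idP => [|xL].
  by have [y yL ->] := distL_attained x; rewrite dist1_eq0 => /eqP ->.
by rewrite -leqn0 (leq_trans (distL_le x xL)) // leqn0 dist1_eq0.
Qed.

Lemma distL_lipschitz x x' : dist1 x x' <= 1 -> distL L x' <= (distL L x).+1.
Proof.
move=> xx'; have [y yL ->] := distL_attained x.
rewrite (leq_trans (distL_le x' yL)) // (leq_trans (dist1_triangle x' x y)) //.
by rewrite addnC -addn1 leq_add2l dist1C.
Qed.

Hypothesis L_lattice : is_lattice L.

Lemma distL_submodular u v :
  distL L (cmin u v) + distL L (cmax u v) <= distL L u + distL L v.
Proof.
have [y1 y1L ->] := distL_attained u; have [y2 y2L ->] := distL_attained v.
have [minL maxL] := L_lattice y1L y2L.
apply: leq_trans (dist1_cmin_cmax u v y1 y2).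
by apply: leq_add; apply: distL_le.
Qed.

End DistanceToLattice.

Definition violates (R : realFieldType) m (f : cube m -> R) z (i j : 'I_m) :=
  (f (addE z i) + f (addE z j) < f z + f (addE (addE z i) j))%R.

Lemma violatesC (R : realFieldType) m (f : cube m -> R) z i j :
  violates f z i j = violates f z j i.
Proof. by rewrite /violates addEC addrC. Qed.

Lemma set4C (T : finType) (a b c d : T) : [set a; b; c; d] = [set a; c; b; d].
Proof. by rewrite (setUAC [set a]). Qed.

Lemma squareC m (z : cube m) i j : square z i j = square z j i.
Proof. by rewrite /square addEC set4C. Qed.

Definition ab_square n (x : cube n) : {set cube n.+2} :=
  [set mkpt false false x; mkpt false true x; mkpt true false x; mkpt true true x].

Lemma square_ab n (x : cube n) : square (mkpt false false x) ord0 ordB = ab_square x.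
Proof. by rewrite /square !addE_mkpt set4C. Qed.

Section ViolatedSquaresOfF.
Variables (R : realFieldType) (n : nat) (L : {set cube n}).
Hypothesis L_neq0 : L != set0.
Local Open Scope ring_scope.
Local Notation f := (f_L R L).
Implicit Types (a b : bool) (x : cube n) (k l : 'I_n).

Lemma distL_addE_le x k : (distL L (addE x k))%:R <= (distL L x)%:R + 1 :> R.
Proof. by rewrite natr1 ler_nat distL_lipschitz ?dist1_addE. Qed.

Lemma distL_le_addE x k : (distL L x)%:R <= (distL L (addE x k))%:R + 1 :> R.
Proof. by rewrite natr1 ler_nat distL_lipschitz // dist1C dist1_addE. Qed.

Lemma norm1_addE_natr x k :
  ~~ x k -> (norm1 (addE x k))%:R = (norm1 x)%:R + 1 :> R.
Proof. by move=> xk; rewrite norm1_addE // natr1. Qed.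

Lemma violates_ab x : violates f (mkpt false false x) ord0 ordB = (x \in L).
Proof.
rewrite /violates !addE_mkpt !f_L_mkpt -distL_eq0 //.
have [->|d_neq0] := eqVneq (distL L x) 0%N; first by apply/idP; lra.
have d_ge1 : 1 <= (distL L x)%:R :> R by rewrite ler1n lt0n.
by apply/negbTE; rewrite -leNgt; lra.
Qed.

Lemma not_violates_a_x b x k :
  ~~ x k -> ~~ violates f (mkpt false b x) ord0 (ordX k).
Proof.
move=> xk; rewrite /violates !addE_mkpt !f_L_mkpt -leNgt norm1_addE_natr //.
by have := distL_addE_le x k; have := distL_le_addE x k; case: b => /=; lra.
Qed.

Lemma not_violates_b_x a x k :
  ~~ x k -> ~~ violates f (mkpt a false x) ordB (ordX k).
Proof.
move=> xk; rewrite /violates !addE_mkpt !f_L_mkpt -leNgt norm1_addE_natr //.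
by have := distL_addE_le x k; have := distL_le_addE x k; case: a => /=; lra.
Qed.

Hypothesis L_lattice : is_lattice L.

Lemma not_violates_x_x a b x k l : k != l -> ~~ x k -> ~~ x l ->
  ~~ violates f (mkpt a b x) (ordX k) (ordX l).
Proof.
move=> kl xk xl; rewrite /violates !addE_mkpt !f_L_mkpt -leNgt.
have xkl : ~~ addE x k l by rewrite ffunE negb_or eq_sym kl.
rewrite !norm1_addE_natr //.
have : (distL L x)%:R + (distL L (addE (addE x k) l))%:R
         <= (distL L (addE x k))%:R + (distL L (addE x l))%:R :> R.
  by rewrite -!natrD ler_nat -{1}(cmin_addE kl xk xl) -cmax_addE distL_submodular.
by case: a; case: b => /=; lra.
Qed.

Lemma violatesP (z : cube n.+2) i j :
  i != j -> ~~ z i -> ~~ z j -> violates f z i j ->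
  exists2 x, x \in L & square z i j = ab_square x.
Proof.
have [a [b [x ->]]] := mkpt_surj z.
wlog le_ij : i j / (i <= j)%N.
  move=> hwlog; case: (leqP i j) => [|/ltnW] le_ji ij zi zj; first exact: hwlog.
  by rewrite violatesC squareC; apply: hwlog; rewrite // eq_sym.
case: (ord_split2P i) le_ij => [||k]; case: (ord_split2P j) => [||l] //= _ ij;
  rewrite !mkpt_coord.
- move=> /negbTE -> /negbTE ->; rewrite violates_ab => xL.
  by exists x => //; apply: square_ab.
- by move=> /negbTE -> xl viol; case/negP: (not_violates_a_x b xl).
- by move=> /negbTE -> xl viol; case/negP: (not_violates_b_x a xl).
- rewrite !(inj_eq (@lift_inj _ ord0)) in ij.
  by move=> xk xl viol; case/negP: (not_violates_x_x a b ij xk xl).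
Qed.

Lemma ab_square_violated x : x \in L -> ab_square x \in violated_squares f.
Proof.
move=> xL; rewrite inE; apply/existsP; exists (mkpt false false x).
apply/existsP; exists ord0; apply/existsP; exists ordB.
have := violates_ab x; rewrite xL /violates => ->.
by rewrite !mkpt_coord square_ab eqxx.
Qed.

End ViolatedSquaresOfF.

Lemma ab_square_inj n : injective (@ab_square n).
Proof.
move=> x y Exy; have : mkpt false false x \in ab_square y by rewrite -Exy !inE eqxx.
by rewrite !inE -!orbA => /or4P[] /eqP /mkpt_inj [].
Qed.

Unset Implicit Arguments.
Local Open Scope ring_scope.

Theorem lemma5 (R : realFieldType) (n : nat) (L : {set cube n})
  (hne : L != set0) (hlat : is_lattice L) :
  violated_squares (@f_L R n L) =
    [set [set mkpt false false x; mkpt false true x;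
              mkpt true false x; mkpt true true x] | x in L]
  /\ #|violated_squares (@f_L R n L)| = #|L|.
Proof.
have violatedE : violated_squares (@f_L R n L) = @ab_square n @: L.
  apply/setP => S; apply/idP/imsetP => [|[x xL ->]]; last exact: ab_square_violated.
  rewrite inE => /existsP[z /existsP[i /existsP[j /and5P[ij zi zj viol /eqP ->]]]].
  exact: violatesP viol.
by rewrite violatedE card_imset //; exact: ab_square_inj.
Qed.
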